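(* For a $*$-ring $R$ the following are equivalent: (1) $R$ is a generalized p.q.-Baer $*$-ring; (2) $R$ is a weakly generalized p.q.-Baer $*$-ring with unity.
   Context: A $*$-ring is a ring with an involution; a projection is $e$ with $e=e^*=e^2$. $r_R(S)=\{a\in R: sa=0\ \forall s\in S\}$. $R$ is a generalized p.q.-Baer $*$-ring if for every $x\in R$ there are $n\in\mathbb N$ and a projection $e$ with $r_R((xR)^n)=eR$. $R$ is a weakly generalized p.q.-Baer $*$-ring if for every $x\in R$ there exist a central projection $e$ and $n\in\mathbb N$ such that $x^ne=x^n$ and, for all $y\in R$, $(xR)^ny=\{0\}$ iff $ey=0$. *)

From HB Require Import structures.
From mathcomp Require Import all_boot all_algebra.
Set Implicit Arguments. Unset Strict Implicit. Unset Printing Implicit Defensive.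
Import GRing.Theory.
Local Open Scope ring_scope.

(* A (not necessarily unital) ring is an additive abelian group R (zmodType)
   with an associative multiplication [mul] distributing over +.
   A *-ring additionally carries an involution [star]. *)
Definition is_star_ring (R : zmodType) (mul : R -> R -> R) (star : R -> R) : Prop :=
  (forall a b c, mul a (mul b c) = mul (mul a b) c) /\
  (forall a b c, mul a (b + c) = mul a b + mul a c) /\
  (forall a b c, mul (a + b) c = mul a c + mul b c) /\
  (forall a b, star (a + b) = star a + star b) /\
  (forall a b, star (mul a b) = mul (star b) (star a)) /\
  (forall a, star (star a) = a).

Section Defs.
Variables (R : zmodType) (mul : R -> R -> R) (star : R -> R).

Definition is_projection (e : R) : Prop := e = star e /\ mul e e = e.

Definition is_central (e : R) : Prop := forall y, mul e y = mul y e.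

Definition has_unity : Prop := exists u : R, forall a, mul u a = a /\ mul a u = a.

(* xpow x m = x^(m+1) *)
Fixpoint xpow (x : R) (m : nat) : R :=
  match m with 0 => x | m'.+1 => mul (xpow x m') x end.

(* xRpow x m a  <->  a is a product s_1 ... s_(m+1) with each s_i in xR,
   i.e. a is in (xR)^(m+1). *)
Fixpoint xRpow (x : R) (m : nat) (a : R) : Prop :=
  match m with
  | 0 => exists r, a = mul x r
  | m'.+1 => exists r b, xRpow x m' b /\ a = mul b (mul x r)
  end.

Definition in_rann (S : R -> Prop) (y : R) : Prop := forall s, S s -> mul s y = 0.

(* generalized p.q.-Baer *-ring: for each x there are n >= 1 (n = m+1) and a
   projection e with r_R((xR)^n) = eR *)
Definition gen_pq_baer : Prop :=
  forall x : R, exists (m : nat) (e : R), is_projection e /\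
    (forall y, in_rann (xRpow x m) y <-> exists r, y = mul e r).

Definition weakly_gen_pq_baer : Prop :=
  forall x : R, exists (e : R) (m : nat), is_projection e /\ is_central e /\
    mul (xpow x m) e = xpow x m /\
    (forall y, in_rann (xRpow x m) y <-> mul e y = 0).

End Defs.

(* With a unity [1], the projections [e] and [1 - e] exchange the two
   descriptions [r((xR)^n) = eR] and [r((xR)^n) = {y | (1 - e) y = 0}].
   Conversely, a generalized p.q.-Baer *-ring has a unity: for [x = 0] the
   annihilator is all of [R], so the corresponding projection is a left unity,
   and the involution makes it two-sided.  The projection [e] is central since
   [(xR)^n] is a right ideal, so its right annihilator [eR] is a two-sided
   ideal: [r e = e r e] for all [r], and applying [*] gives [e r = e r e]. *)

From mathcomp Require Import all_boot all_algebra.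
Set Implicit Arguments. Unset Strict Implicit.
Import GRing.Theory.
Local Open Scope ring_scope.

Section StarRing.
Variables (R : zmodType) (mul : R -> R -> R) (star : R -> R).
Hypothesis mulA : forall a b c, mul a (mul b c) = mul (mul a b) c.
Hypothesis mulDr : forall a b c, mul a (b + c) = mul a b + mul a c.
Hypothesis mulDl : forall a b c, mul (a + b) c = mul a c + mul b c.
Hypothesis starD : forall a b, star (a + b) = star a + star b.
Hypothesis starM : forall a b, star (mul a b) = mul (star b) (star a).
Hypothesis starK : forall a, star (star a) = a.

Definition is_unity (u : R) : Prop := forall a, mul u a = a /\ mul a u = a.

Lemma mulx0 a : mul a 0 = 0.
Proof. by apply: (addrI (mul a 0)); rewrite -mulDr !addr0. Qed.

Lemma mul0x a : mul 0 a = 0.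
Proof. by apply: (addrI (mul 0 a)); rewrite -mulDl !addr0. Qed.

Lemma mulxBr a b c : mul a (b - c) = mul a b - mul a c.
Proof. by rewrite -[in RHS](subrK c b) mulDr addrK. Qed.

Lemma mulxBl a b c : mul (a - c) b = mul a b - mul c b.
Proof. by rewrite -[in RHS](subrK c a) mulDl addrK. Qed.

Lemma starB a b : star (a - b) = star a - star b.
Proof. by rewrite -[in RHS](subrK b a) starD addrK. Qed.

Lemma xRpow_mulr x m s r : xRpow mul x m s -> xRpow mul x m (mul s r).
Proof.
case: m => [|m] /=.
  by case=> r0 ->; exists (mul r0 r); rewrite mulA.
by case=> r0 [b [xb ->]]; exists (mul r0 r), b; rewrite -!mulA.
Qed.

Lemma xRpow0 m s : xRpow mul 0 m s -> s = 0.
Proof.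
case: m => [|m] /=; first by case=> r ->; rewrite mul0x.
by case=> r [b [_ ->]]; rewrite mul0x mulx0.
Qed.

Lemma xRpow_xpow u : is_unity u -> forall x m, xRpow mul x m (xpow mul x m).
Proof.
move=> uU x; elim=> [|m IHm] /=; first by exists u; rewrite (proj2 (uU x)).
by exists u, (xpow mul x m); rewrite (proj2 (uU x)).
Qed.

Lemma rann_mull (S : R -> Prop) :
    (forall s r, S s -> S (mul s r)) ->
  forall r y, in_rann mul S y -> in_rann mul S (mul r y).
Proof. by move=> Sr r y Sy s Ss; rewrite mulA; apply: Sy; apply: Sr. Qed.

Lemma star_unity u : is_unity u -> star u = u.
Proof.
move=> uU; have := starM u (star u).
by rewrite (proj1 (uU _)) starK (proj1 (uU _)) => <-.
Qed.

Lemma left_unity_projection e :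
  is_projection mul star e -> (forall y, mul e y = y) -> is_unity e.
Proof.
move=> [e_sa _] eL a; split=> //.
by have := starM e (star a); rewrite eL starK -e_sa => <-.
Qed.

Lemma projection_central e :
    is_projection mul star e ->
    (forall r, exists r', mul r e = mul e r') ->
  is_central mul e.
Proof.
move=> [e_sa e_id] eRideal.
have eRe r : mul r e = mul e (mul r e).
  by have [r' ->] := eRideal r; rewrite mulA e_id.
move=> r; have := congr1 star (eRe (star r)).
by rewrite !starM starK -e_sa => ->; rewrite -mulA -eRe.
Qed.

Lemma projection_unity_subr u e :
  is_unity u -> is_projection mul star e -> is_projection mul star (u - e).
Proof.
move=> uU [e_sa e_id]; split.
  by rewrite starB star_unity // -e_sa.
by rewrite mulxBl !mulxBr !(proj1 (uU _)) (proj2 (uU _)) e_id subrr subr0.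
Qed.

Lemma central_unity_subr u e : is_unity u -> is_central mul e -> is_central mul (u - e).
Proof. by move=> uU eC y; rewrite mulxBl mulxBr eC (proj1 (uU _)) (proj2 (uU _)). Qed.

Lemma idempotent_range_ker u e y :
  is_unity u -> mul e e = e -> (exists r, y = mul e r) <-> mul (u - e) y = 0.
Proof.
move=> uU e_id; rewrite mulxBl (proj1 (uU _)); split.
  by case=> r ->; rewrite mulA e_id subrr.
by move/eqP; rewrite subr_eq0 => /eqP ey; exists y.
Qed.

Lemma unity_gen_pq_baer : gen_pq_baer mul star -> has_unity mul.
Proof.
move=> baer; have [m [e [e_proj rannE]]] := baer 0.
have eL y : mul e y = y.
  have : in_rann mul (xRpow mul 0 m) y by move=> s /xRpow0 ->; rewrite mul0x.
  by case/rannE=> r ->; rewrite mulA (proj2 e_proj).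
by exists e; apply: left_unity_projection.
Qed.

Lemma weakly_gen_pq_baer_gen : gen_pq_baer mul star -> weakly_gen_pq_baer mul star.
Proof.
move=> baer x; have [u uU] := unity_gen_pq_baer baer.
have [m [e [e_proj rannE]]] := baer x.
have rann_e : in_rann mul (xRpow mul x m) e by apply/rannE; exists e; rewrite (proj2 e_proj).
have eC : is_central mul e.
  apply: projection_central => // r; apply/rannE.
  by apply: rann_mull rann_e; apply: xRpow_mulr.
exists (u - e), m; split; first exact: projection_unity_subr.
split; first exact: central_unity_subr.
split; first by rewrite mulxBr (proj2 (uU _)) (rann_e _ (xRpow_xpow uU x m)) subr0.
by move=> y; apply: iff_trans (rannE y) _; apply: idempotent_range_ker (proj2 e_proj).
Qed.

Lemma gen_pq_baer_weakly_unity :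
  weakly_gen_pq_baer mul star -> has_unity mul -> gen_pq_baer mul star.
Proof.
move=> baer [u uU] x; have [e [m [e_proj [_ [_ rannE]]]]] := baer x.
have ce_proj := projection_unity_subr uU e_proj.
exists m, (u - e); split=> // y; apply: iff_trans (rannE y) _.
by have := idempotent_range_ker y uU (proj2 ce_proj); rewrite subKr; apply: iff_sym.
Qed.

End StarRing.

Theorem mainTheorem9 (R : zmodType) (mul : R -> R -> R) (star : R -> R) :
  is_star_ring mul star ->
  (gen_pq_baer mul star <-> (weakly_gen_pq_baer mul star /\ has_unity mul)).
Proof.
move=> [mulA [mulDr [mulDl [starD [starM starK]]]]]; split.
  by move=> baer; split; [apply: weakly_gen_pq_baer_gen | apply: unity_gen_pq_baer].
by case; apply: gen_pq_baer_weakly_unity.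
Qed.
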